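(* Let $n\geq 5$ be an odd prime and $q=2^f$ for some positive integer $f$. If $P_q^n=\{r\}$, then $r\geq 4nf+1$.
   Context: For integers $x\geq 2$ and $m\geq 1$, $P_x^m$ denotes the set of primitive prime divisors of $x^m-1$, i.e. primes dividing $x^m-1$ but not dividing $x^i-1$ for any $1\leq i<m$. *)

From mathcomp Require Import all_boot.

Definition ppd (x m p : nat) : bool :=
  [&& prime p, p %| x ^ m - 1 & [forall i : 'I_m, (0 < i) ==> ~~ (p %| x ^ i - 1)]].

From mathcomp Require Import all_boot.
From mathcomp Require Import zify ring.

Set Implicit Arguments.
Unset Strict Implicit.

(* Let q = 2^f and Phi = (q^n - 1)/(q - 1).  A prime factor of Phi not dividing
   q - 1 is a primitive prime divisor, hence equals r; one dividing q - 1 divides n,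
   and n^2 does not divide Phi.  So Phi = u r^A with u | gcd(n, q - 1).
   If n^k is the exact power of n dividing f, a primitive prime divisor of
   2^(n^(k+1)) - 1 (which exists since n is an odd prime) stays primitive for
   q^n - 1, so it is r.  Lifting the exponent bounds the r-part of Phi by
   (2^(n^(k+1)) - 1) (f / n^k), and Phi >= q^(n-1) then forces f = n^k.  Hence 2 has
   order fn modulo r, so 2fn | r - 1, and it remains to rule out r = 2fn + 1.  Then
   u = 1 because q = 2 (mod n), so Phi = r^A, and:
   - for f = 1, A is odd and the 2-adic valuations of r^(2A) - 1 = (2^n - 2) 2^n
     disagree;
   - for f = n, 3 divides r = 2n^2 + 1;
   - for f >= n^2, q divides Phi - 1 = r^A - 1, whose 2-adic valuation is at most
     v_2(r^2 - 1) + v_2(A), far less than f. *)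

Definition geom_sum (x m : nat) : nat := \sum_(i < m) x ^ i.

Lemma geom_sum0 x : geom_sum x 0 = 0.
Proof. by rewrite /geom_sum big_ord0. Qed.

Lemma geom_sumS x m : geom_sum x m.+1 = geom_sum x m + x ^ m.
Proof. by rewrite /geom_sum big_ord_recr. Qed.

Lemma geom_sumD x a b : geom_sum x (a + b) = geom_sum x a + x ^ a * geom_sum x b.
Proof.
rewrite /geom_sum big_split_ord big_distrr /=; congr (_ + _).
by apply: eq_bigr => i _; rewrite expnD.
Qed.

Lemma geom_sumSl x m : geom_sum x m.+1 = 1 + x * geom_sum x m.
Proof. by rewrite -add1n geom_sumD expn1 /geom_sum big_ord1. Qed.

Lemma geom_sumM x k m : geom_sum x (k * m) = geom_sum x k * geom_sum (x ^ k) m.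
Proof.
elim: m => [|m IHm]; first by rewrite muln0 !geom_sum0 muln0.
by rewrite mulnS geom_sumD IHm geom_sumSl mulnDr muln1 mulnCA.
Qed.

Lemma subn1_exp x m : x ^ m - 1 = (x - 1) * geom_sum x m.
Proof. by rewrite !subn1 predn_exp. Qed.

Lemma geom_sum_gt0 x m : 0 < m -> 0 < geom_sum x m.
Proof. by case: m => // m _; rewrite geom_sumSl. Qed.

Lemma geom_sum_lt_exp x m : 1 < x -> geom_sum x m < x ^ m.
Proof.
move=> x_gt1; have := subn1_exp x m; have : 0 < x ^ m by rewrite expn_gt0 ltnW.
by move: (geom_sum x m) => G; nia.
Qed.

Lemma exp_pred_le_geom_sum x m : 0 < m -> x ^ m.-1 <= geom_sum x m.
Proof. by case: m => // m _; rewrite geom_sumS leq_addl. Qed.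

Lemma ltn_geom_sum x m : 1 < x -> 1 < m -> m < geom_sum x m.
Proof.
move=> x_gt1; elim: m => // m IHm; rewrite ltnS leq_eqVlt => /predU1P [<- | m_gt1].
  by rewrite !geom_sumS geom_sum0 expn0 expn1.
by rewrite geom_sumS -addn1 leq_add ?IHm // expn_gt0 ltnW.
Qed.

Lemma geom_sum_mod x m d : x = 1 %[mod d] -> geom_sum x m = m %[mod d].
Proof.
move=> x_mod; elim: m => [|m IHm]; first by rewrite geom_sum0.
by rewrite geom_sumS -modnDm IHm -modnXm x_mod modnXm exp1n modnDm addn1.
Qed.

Lemma odd_geom_sum x m : odd x -> odd (geom_sum x m) = odd m.
Proof.
move=> x_odd; have x_mod : x = 1 %[mod 2] by rewrite modn2 x_odd.
by have := geom_sum_mod m x_mod; rewrite !modn2; case: odd; case: odd.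
Qed.

Lemma dvdn_subn1 x d : 0 < x -> (d %| x - 1) = (x == 1 %[mod d]).
Proof. by move=> x_gt0; rewrite eqn_mod_dvd. Qed.

Lemma expn_mod1_dvdn x d a b : x ^ a = 1 %[mod d] -> a %| b -> x ^ b = 1 %[mod d].
Proof. by move=> xa /dvdnP [k ->]; rewrite mulnC expnM -modnXm xa modnXm exp1n. Qed.

Lemma expn_mod1_gcd x d a b :
  x ^ a = 1 %[mod d] -> x ^ b = 1 %[mod d] -> x ^ gcdn a b = 1 %[mod d].
Proof.
move=> xa xb; have [-> | a_gt0] := posnP a; first by rewrite gcd0n.
have [ka kb def_a _] := egcdnP b a_gt0.
have : x ^ (kb * b + gcdn a b) = 1 %[mod d].
  by rewrite -def_a (expn_mod1_dvdn xa (dvdn_mull ka (dvdnn a))).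
by rewrite expnD -modnMml (expn_mod1_dvdn xb (dvdn_mull kb (dvdnn b))) modnMml mul1n.
Qed.

Lemma fermat_pred a p : prime p -> ~~ (p %| a) -> a ^ p.-1 = 1 %[mod p].
Proof.
move=> p_pr p_a; have a_gt0 : 0 < a by case: a p_a; rewrite ?dvdn0.
have : p %| a * (a ^ p.-1 - 1).
  rewrite mulnBr muln1 -expnS prednK ?prime_gt0 // -eqn_mod_dvd ?fermat_little //.
  by rewrite -{1}(expn1 a) leq_pexp2l // prime_gt0.
by rewrite Gauss_dvdr ?prime_coprime // dvdn_subn1 ?expn_gt0 ?a_gt0 // => /eqP.
Qed.

Lemma expn_pfactor_mod a p k : prime p -> a ^ (p ^ k) = a %[mod p].
Proof.
move=> p_pr; elim: k => [|k IHk]; first by rewrite expn1.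
by rewrite expnSr expnM -modnXm IHk modnXm fermat_little.
Qed.

Lemma pfactor_dvdn_exponent x d p k e : prime p ->
  x ^ (p ^ k.+1) = 1 %[mod d] -> x ^ (p ^ k) != 1 %[mod d] ->
  x ^ e = 1 %[mod d] -> p ^ k.+1 %| e.
Proof.
move=> p_pr xpk1 xpk xe; have := dvdn_gcdl (p ^ k.+1) e.
case/(dvdn_pfactor _ _ p_pr) => j; rewrite leq_eqVlt => /predU1P [-> <- | j_lt def_g].
  exact: dvdn_gcdr.
case/negP: xpk; apply/eqP/(expn_mod1_dvdn (expn_mod1_gcd xpk1 xe)).
by rewrite def_g dvdn_exp2l.
Qed.

Lemma dvdn_geom_sum x d m : x = 1 %[mod d] -> (d %| geom_sum x m) = (d %| m).
Proof. by move=> x_mod; rewrite /dvdn (geom_sum_mod m x_mod). Qed.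

Lemma expnS_mod_sqr x i : exists c, x.+1 ^ i = 1 + i * x + c * x ^ 2.
Proof.
elim: i => [|i [c IHi]]; first by exists 0; rewrite expn0 mul0n.
by exists (c * x.+1 + i); rewrite expnS IHi; ring.
Qed.

Lemma geom_sumS_mod_sqr x m : exists c, geom_sum x.+1 m = m + x * 'C(m, 2) + c * x ^ 2.
Proof.
elim: m => [|m [C IHm]]; first by exists 0; rewrite geom_sum0 bin0n muln0.
have [c def_xm] := expnS_mod_sqr x m.
by exists (C + c); rewrite geom_sumS IHm def_xm binS bin1; ring.
Qed.

Lemma geom_sum_prime_mod_sqr x p : prime p -> odd p -> x = 1 %[mod p] ->
  geom_sum x p = p %[mod p ^ 2].
Proof.
move=> p_pr p_odd x_mod; have p_gt2 := odd_prime_gt2 p_odd p_pr.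
have [a ->] : exists a, x = (a * p).+1.
  by exists (x %/ p); rewrite {1}(divn_eq x p) x_mod modn_small ?addn1 // ltnW.
have /dvdnP [b def_bin] : p %| 'C(p, 2) by rewrite prime_dvd_bin // ltnW.
have [c ->] := geom_sumS_mod_sqr (a * p) p.
have -> : p + a * p * 'C(p, 2) + c * (a * p) ^ 2 = (a * b + c * a ^ 2) * p ^ 2 + p.
  by rewrite def_bin; ring.
by rewrite modnMDl.
Qed.

Lemma logn_geom_sum_prime x p : prime p -> odd p -> x = 1 %[mod p] ->
  logn p (geom_sum x p) = 1.
Proof.
move=> p_pr p_odd x_mod; have p_gt1 := prime_gt1 p_pr.
have G_mod := geom_sum_prime_mod_sqr p_pr p_odd x_mod.
have -> : geom_sum x p = p * (1 + geom_sum x p %/ p ^ 2 * p).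
  by rewrite {1}(divn_eq (geom_sum x p) (p ^ 2)) G_mod modn_small; [ring | nia].
rewrite (lognM _ (prime_gt0 p_pr)) // (logn_prime _ p_pr) eqxx logn_coprime //.
by rewrite prime_coprime // dvdn_addl ?dvdn_mull // dvdn1 neq_ltn p_gt1 orbT.
Qed.

Lemma logn_geom_sum x p m : prime p -> odd p -> x = 1 %[mod p] ->
  logn p (geom_sum x m) = logn p m.
Proof.
move=> p_pr p_odd x_mod; elim/ltn_ind: m => m IHm.
have [p_m | p'm] := boolP (p %| m); last first.
  by rewrite !logn_coprime // prime_coprime // dvdn_geom_sum.
have [-> | m_gt0] := posnP m; first by rewrite geom_sum0.
have [k def_m] := dvdnP p_m.
have k_gt0 : 0 < k by move: m_gt0; rewrite def_m muln_gt0 => /andP [].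
have xk_mod : x ^ k = 1 %[mod p] by rewrite -modnXm x_mod modnXm exp1n.
have p_gt0 := prime_gt0 p_pr.
rewrite def_m geom_sumM !lognM ?geom_sum_gt0 // logn_geom_sum_prime //.
by rewrite (logn_prime _ p_pr) eqxx IHm // def_m ltn_Pmulr ?prime_gt1.
Qed.

Lemma odd_sqr_mod4 z : odd z -> z ^ 2 = 1 %[mod 4].
Proof.
move=> z_odd; have -> : z ^ 2 = (z./2 * z./2 + z./2) * 4 + 1.
  by rewrite -{1}(odd_double_half z) z_odd -muln2 add1n; ring.
by rewrite modnMDl.
Qed.

Lemma logn2_mod4 w : w = 2 %[mod 4] -> logn 2 w = 1.
Proof.
move=> w_mod; have -> : w = 2 * (2 * (w %/ 4) + 1).
  by rewrite {1}(divn_eq w 4) w_mod modn_small //; ring.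
by rewrite addn1 lognM // logn_prime // logn_coprime // coprime2n /= oddM.
Qed.

Lemma logn2_sub1_exp2 r j : odd r -> 1 < r ->
  logn 2 (r ^ (2 ^ j) - 1) <= logn 2 (r ^ 2 - 1) + j.
Proof.
move=> r_odd r_gt1; have r2_gt1 : 1 < r ^ 2 by rewrite -(exp1n 2) ltn_exp2r.
case: j => [|j].
  by rewrite expn0 expn1 addn0 dvdn_leq_log ?subn_gt0 // subn1_exp dvdn_mulr.
elim: j => [|j IHj]; first by rewrite addn1 leqnSn.
set s := r ^ (2 ^ j.+1).
have s_gt1 : 1 < s by rewrite -(exp1n (2 ^ j.+1)) ltn_exp2r // expn_gt0.
have -> : r ^ 2 ^ j.+2 - 1 = (s - 1) * (s + 1).
  by rewrite expnS mulnC expnM -(exp1n 2) subn_sqr exp1n.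
have s_mod : s = 1 %[mod 4] by rewrite /s expnS mulnC expnM odd_sqr_mod4 // oddX r_odd orbT.
rewrite lognM ?subn_gt0 ?addn1 // (@logn2_mod4 s.+1); last by rewrite -addn1 -modnDml s_mod.
by rewrite addn1 addnS ltnS.
Qed.

Lemma logn2_sub1_exp r a : odd r -> 1 < r -> 0 < a ->
  logn 2 (r ^ a - 1) <= logn 2 (r ^ 2 - 1) + logn 2 a.
Proof.
move=> r_odd r_gt1 a_gt0; have [b b_odd def_a] := pfactor_coprime (isT : prime 2) a_gt0.
have rj_odd : odd (r ^ (2 ^ logn 2 a)) by rewrite oddX r_odd orbT.
rewrite {1}def_a mulnC expnM subn1_exp mulnC logn_Gauss ?logn2_sub1_exp2 //.
by rewrite coprime2n odd_geom_sum // -coprime2n.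
Qed.

Lemma ppd_primeE y n s : 0 < y -> prime n ->
  ppd y n s = [&& prime s, s %| y ^ n - 1 & ~~ (s %| y - 1)].
Proof.
move=> y_gt0 n_pr; rewrite /ppd.
apply/and3P/and3P => [[s_pr s_yn /forallP s_yi] | [s_pr s_yn s'y]]; split=> //.
  by have := s_yi (Ordinal (prime_gt1 n_pr)); rewrite expn1.
apply/forallP => -[i /= lt_i_n]; apply/implyP => i_gt0; apply: contra s'y.
move: s_yn; rewrite !dvdn_subn1 ?expn_gt0 ?y_gt0 // => /eqP y_n /eqP y_i.
have /eqP cop : coprime i n by rewrite coprime_sym prime_coprime // gtnNdvd.
by apply/eqP; have := expn_mod1_gcd y_i y_n; rewrite cop expn1.
Qed.

Lemma ppd_expn y c n s : 0 < y -> prime n -> ~~ (n %| c) -> ppd y n s -> ppd (y ^ c) n s.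
Proof.
move=> y_gt0 n_pr n'c; have yc_gt0 : 0 < y ^ c by rewrite expn_gt0 y_gt0.
rewrite !ppd_primeE // => /and3P [s_pr].
rewrite !dvdn_subn1 ?expn_gt0 ?y_gt0 // => /eqP y_n s'y.
rewrite s_pr -expnM (expn_mod1_dvdn y_n (dvdn_mull c (dvdnn n))) eqxx /=.
apply: contra s'y => /eqP y_c.
have /eqP cop : coprime c n by rewrite coprime_sym prime_coprime.
by apply/eqP; have := expn_mod1_gcd y_c y_n; rewrite cop expn1.
Qed.

Lemma dvdn_geom_sum_prime_gcd x n d : 0 < x -> prime n -> odd n ->
  d %| geom_sum x n -> (forall p, prime p -> p %| d -> p %| x - 1) ->
  d %| gcdn n (x - 1).
Proof.
move=> x_gt0 n_pr n_odd d_G d_x.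
have d_gt0 : 0 < d := dvdn_gt0 (geom_sum_gt0 x (prime_gt0 n_pr)) d_G.
have d_nat : n.-nat d.
  apply/pnatP => // p p_pr p_d; have := d_x p p_pr p_d.
  rewrite dvdn_subn1 // => /eqP x_mod.
  by move: (dvdn_trans p_d d_G); rewrite dvdn_geom_sum // dvdn_prime2.
have def_d : d = n ^ logn n d by rewrite -p_part part_pnat_id.
have [n_x | n'x] := boolP (n %| x - 1).
  have x_mod : x = 1 %[mod n] by apply/eqP; rewrite -dvdn_subn1.
  have d_le1 : logn n d <= 1.
    rewrite -(logn_geom_sum_prime n_pr n_odd x_mod).
    by rewrite dvdn_leq_log ?geom_sum_gt0 ?prime_gt0.
  have /gcdn_idPl -> := n_x; rewrite def_d.
  by case: (logn n d) d_le1 => [|[|]].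
suff -> : d = 1 by rewrite dvd1n.
rewrite def_d; suff -> : logn n d = 0 by [].
apply/eqP; apply: contraNT n'x; rewrite -lt0n logn_gt0 mem_primes => /and3P [_ _ n_d].
exact: d_x n_pr n_d.
Qed.

Lemma exists_ppd_prime y n : 1 < y -> prime n -> odd n -> exists s, ppd y n s.
Proof.
move=> y_gt1 n_pr n_odd; have y_gt0 := ltnW y_gt1.
have G_gt0 : 0 < geom_sum y n by rewrite geom_sum_gt0 ?prime_gt0.
have [/allP G_y | /allPn [s]] := boolP (all (fun s => s %| y - 1) (primes (geom_sum y n))).
  have : geom_sum y n %| gcdn n (y - 1).
    apply: dvdn_geom_sum_prime_gcd => // p p_pr p_G.
    by apply: G_y; rewrite mem_primes p_pr G_gt0.
  move/dvdn_trans/(_ (dvdn_gcdl _ _))/dvdn_leq; rewrite prime_gt0 // => /(_ isT) G_le_n.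
  by have := ltn_geom_sum y_gt1 (prime_gt1 n_pr); rewrite ltnNge G_le_n.
rewrite mem_primes => /and3P [s_pr _ s_G] s'y; exists s.
by rewrite ppd_primeE // s_pr s'y subn1_exp dvdn_mull.
Qed.

Lemma exp2_sub1_mul_lt g m n : 0 < g -> 1 < m -> 4 < n ->
  (2 ^ (g * m) - 1) * ((2 ^ (g * n) - 1) * m) < 2 ^ (g * m * n.-1).
Proof.
move=> g_gt0 m_gt1 n_gt4.
have m_le : m <= 2 ^ m.-1 by rewrite -{1}(prednK (ltnW m_gt1)) ltn_expl.
have exp_le : g * m + g * n + m.-1 <= g * m * n.-1 by nia.
apply: leq_trans (leq_pexp2l (isT : 0 < 2) exp_le); rewrite !expnD.
set A := 2 ^ (g * m); set B := 2 ^ (g * n); set K := 2 ^ m.-1 in m_le *.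
have [A_gt0 B_gt0 K_gt0] : [/\ 0 < A, 0 < B & 0 < K] by rewrite !expn_gt0.
apply: leq_ltn_trans (_ : _ <= (A - 1) * ((B - 1) * K)) _; first by rewrite !leq_mul.
by rewrite mulnA ltn_pmul2r // ltn_mul // ltn_subrL.
Qed.

Lemma expn5_lt_exp2 f : 22 < f -> f ^ 5 < 2 ^ f.
Proof.
move=> f_gt22; rewrite -(subnKC f_gt22); elim: (f - 23) => [|k IHk]; first by lia.
have : (23 + k).+1 ^ 5 <= 2 * (23 + k) ^ 5 by rewrite !expnS expn0; nia.
by rewrite addnS (expnS 2); lia.
Qed.

Lemma dvdn3_double_sqr_add1 n : ~~ (3 %| n) -> 3 %| 2 * n ^ 2 + 1.
Proof. by move=> n'3; rewrite /dvdn -modnDml -modnMmr (fermat_pred _ n'3). Qed.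

Lemma logn2_sqr_sub1 N : odd N -> logn 2 ((2 * N).+1 ^ 2 - 1) = (logn 2 N.+1).+2.
Proof.
move=> N_odd; have -> : (2 * N).+1 ^ 2 = 2 * (2 * (N * N.+1)) + 1 by ring.
rewrite addnK.
have N_gt0 : 0 < N by case: N N_odd.
by rewrite !lognM ?muln_gt0 ?N_gt0 // logn_prime // (@logn_coprime 2 N) ?coprime2n.
Qed.

Lemma pow_neq_mersenne n A : odd n -> 4 < n -> (2 * n).+1 ^ A != 2 ^ n - 1.
Proof.
move=> n_odd n_gt4; apply/eqP => rA; set r := (2 * n).+1 in rA.
have r_odd : odd r by rewrite /= oddM.
have r_gt1 : 1 < r by rewrite /r; lia.
have pow2n_gt0 : 0 < 2 ^ n by rewrite expn_gt0.
have A_odd : odd A.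
  apply: contraT => A_even; have : r ^ A = 1 %[mod 4].
    rewrite -[A](odd_double_half A) (negbTE A_even) add0n -muln2 expnM.
    by rewrite odd_sqr_mod4 // oddX r_odd orbT.
  have pow2n : 2 ^ n = 2 ^ (n - 2) * 4 by rewrite -[4]/(2 ^ 2) -expnD subnK //; lia.
  have : 0 < 2 ^ (n - 2) by rewrite expn_gt0.
  by rewrite rA pow2n; lia.
have lower : n.+1 <= logn 2 (r ^ (2 * A) - 1).
  rewrite mulnC expnM -(exp1n 2) subn_sqr exp1n rA subnK //.
  have n_gt0 : 0 < n by lia.
  have two_lt : 2 < 2 ^ n by rewrite (@leq_trans (2 ^ 2)) // leq_pexp2l //; lia.
  have pos : 0 < (2 ^ n - 1 - 1) * 2 ^ n by rewrite muln_gt0 pow2n_gt0 -subnDA subn_gt0 two_lt.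
  by rewrite -pfactor_dvdn // expnS dvdn_mul // -subnDA dvdn_sub // dvdn_exp.
have A_gt0 : 0 < A by rewrite odd_gt0.
have logn2_2A : logn 2 (2 * A) = 1.
  by rewrite lognM // logn_prime // (@logn_coprime 2 A) ?coprime2n.
have := leq_trans lower (logn2_sub1_exp r_odd r_gt1 (_ : 0 < 2 * A)).
rewrite logn2_sqr_sub1 // logn2_2A muln_gt0 A_gt0 => /(_ isT) n_lt.
have : 2 ^ (n - 2) <= n.+1.
  apply: leq_trans (dvdn_leq (ltn0Sn n) (pfactor_dvdnn 2 n.+1)).
  by rewrite leq_exp2l //; lia.
have -> : 2 ^ (n - 2) = 2 ^ (n - 5) * 8 by rewrite -[8]/(2 ^ 3) -expnD; congr (2 ^ _); lia.
by have := ltn_expl (n - 5) (isT : 1 < 2); lia.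
Qed.

Lemma logn2_sub1_pow_lt N A f : odd N -> N <= f ^ 2 -> 24 < f -> 0 < A -> A < N ->
  logn 2 ((2 * N).+1 ^ A - 1) < f.
Proof.
move=> N_odd N_le f_gt24 A_gt0 A_lt_N; set r := (2 * N).+1.
have r_odd : odd r by rewrite /= oddM.
have r_gt1 : 1 < r by rewrite /r; lia.
have := logn2_sub1_exp r_odd r_gt1 A_gt0; rewrite logn2_sqr_sub1 // => L_le.
rewrite -(ltn_exp2l _ _ (isT : 1 < 2)); apply: leq_ltn_trans (leq_pexp2l (isT : 0 < 2) L_le) _.
have P_le : 2 ^ logn 2 N.+1 <= N.+1 := dvdn_leq (ltn0Sn N) (pfactor_dvdnn 2 N.+1).
have Q_le : 2 ^ logn 2 A <= A := dvdn_leq A_gt0 (pfactor_dvdnn 2 A).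
have PQ_le := leq_mul P_le Q_le.
have NN_le : N * N <= f ^ 2 * f ^ 2 := leq_mul N_le N_le.
have f5_lt : f ^ 5 < 2 ^ f by apply: expn5_lt_exp2; lia.
have f5E : f ^ 5 = f * (f ^ 2 * f ^ 2) by rewrite -!expnD -expnS.
(* 2^L <= 4 (N + 1) A < 4 (N + 1) N <= 4 (f^2 + 1) f^2 <= f^5 < 2^f *)
rewrite expnD !expnS; move: PQ_le NN_le f5_lt f5E.
move: (2 ^ logn 2 N.+1) (2 ^ logn 2 A) (f ^ 2 * f ^ 2) (f ^ 5) (2 ^ f) => P Q F4 F5 T; nia.
Qed.

Section UniquePrimitivePrimeDivisor.

Variables n f r : nat.
Hypotheses (n_prime : prime n) (n_ge5 : 5 <= n) (n_odd : odd n) (f_gt0 : 0 < f).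
Hypothesis r_ppd : ppd (2 ^ f) n r.
Hypothesis r_unique : forall p, ppd (2 ^ f) n p -> p = r.

Local Notation q := (2 ^ f).
Local Notation Phi := (geom_sum (2 ^ f) n).

Lemma q_gt1 : 1 < q.
Proof. by rewrite -{1}(expn0 2) ltn_exp2l. Qed.

Lemma Phi_gt1 : 1 < Phi.
Proof. by apply: ltn_trans (ltn_geom_sum q_gt1 (prime_gt1 n_prime)); apply: prime_gt1. Qed.

Lemma r_ppdE : [&& prime r, r %| q ^ n - 1 & ~~ (r %| q - 1)].
Proof. by rewrite -ppd_primeE // ltnW // q_gt1. Qed.

Lemma r_prime : prime r.
Proof. by case/and3P: r_ppdE. Qed.

Lemma r_odd : odd r.
Proof.
case/and3P: r_ppdE => r_pr r_qn _; apply: contraT => r_even.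
have r2 : r = 2 by apply/eqP; rewrite eq_sym -dvdn_prime2 // dvdn2.
have fn_gt0 : 0 < f * n by rewrite muln_gt0 f_gt0 prime_gt0.
by move: r_qn; rewrite r2 -expnM dvdn2 oddB ?expn_gt0 // oddX /= eqn0Ngt fn_gt0.
Qed.

Lemma Phi_coprime_dvdn u : coprime r u -> u %| Phi -> u %| gcdn n (q - 1).
Proof.
move=> r'u u_Phi; apply: dvdn_geom_sum_prime_gcd => // [|p p_pr p_u]; first exact: ltnW q_gt1.
apply: contraT => p'q; have : ppd q n p.
  rewrite ppd_primeE ?p_pr ?p'q ?(ltnW q_gt1) //.
  by rewrite subn1_exp dvdn_mull // (dvdn_trans p_u u_Phi).
by move/r_unique => p_r; move: r'u; rewrite prime_coprime ?r_prime // -p_r p_u.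
Qed.

Lemma exp_pfactor_mod1 : 2 ^ (n ^ (logn n f).+1) = 1 %[mod r].
Proof.
set k := logn n f; have [c n'c def_f] := pfactor_coprime n_prime f_gt0.
have y_gt1 : 1 < 2 ^ (n ^ k) by rewrite -{1}(expn0 2) ltn_exp2l // expn_gt0 prime_gt0.
have [s s_ppd] := exists_ppd_prime y_gt1 n_prime n_odd.
have : ppd q n s.
  rewrite def_f mulnC expnM ppd_expn ?expn_gt0 // -prime_coprime // coprime_sym.
move/r_unique => s_r; move: s_ppd; rewrite s_r ppd_primeE ?expn_gt0 //.
by case/and3P => _; rewrite dvdn_subn1 ?expn_gt0 // -expnM -expnSr => /eqP.
Qed.

Lemma rpart_Phi_le g : 0 < g -> g %| f -> 2 ^ (g * n) = 1 %[mod r] ->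
  r ^ logn r Phi <= (2 ^ (g * n) - 1) * (f %/ g).
Proof.
move=> g_gt0 g_f y_mod; set y := 2 ^ (g * n); set m := f %/ g.
have m_gt0 : 0 < m by rewrite divn_gt0 // dvdn_leq.
have y_gt1 : 1 < y by rewrite -{1}(expn0 2) ltn_exp2l // muln_gt0 g_gt0 prime_gt0.
have qn_eq : q ^ n - 1 = (y - 1) * geom_sum y m.
  by rewrite -subn1_exp -!expnM -{1}(divnK g_f) -/m; congr (2 ^ _ - 1); ring.
have qn_gt0 : 0 < q ^ n - 1 by rewrite qn_eq muln_gt0 subn_gt0 y_gt1 geom_sum_gt0.
have r_pr := r_prime.
have : logn r Phi <= logn r (y - 1) + logn r m.
  rewrite -[logn r m](@logn_geom_sum y r m r_pr r_odd y_mod).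
  rewrite -lognM ?subn_gt0 ?geom_sum_gt0 // -qn_eq.
  by rewrite dvdn_leq_log // subn1_exp dvdn_mull.
move/(leq_pexp2l (prime_gt0 r_pr)); rewrite expnD => /leq_trans; apply.
by rewrite leq_mul // dvdn_leq ?pfactor_dvdnn ?subn_gt0.
Qed.

Lemma f_pfactor : f = n ^ logn n f.
Proof.
set g := n ^ logn n f; have g_f : g %| f := pfactor_dvdnn n f.
have g_gt0 : 0 < g by rewrite expn_gt0 prime_gt0.
apply/eqP; apply: contraT => f_neq_g; have /dvdnP [m def_f] := g_f.
have m_gt1 : 1 < m.
  case: m def_f => [|[|m]] // def_f; first by move: f_gt0; rewrite def_f.
  by move: f_neq_g; rewrite def_f mul1n eqxx.
have y_mod : 2 ^ (g * n) = 1 %[mod r] by rewrite /g -expnSr exp_pfactor_mod1.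
have [u r'u def_Phi] := pfactor_coprime r_prime (ltnW Phi_gt1).
have u_le : u <= q - 1.
  apply: dvdn_leq; first by rewrite subn_gt0 q_gt1.
  by rewrite (dvdn_trans (Phi_coprime_dvdn r'u _)) ?dvdn_gcdr // def_Phi dvdn_mulr.
suff Phi_le : q ^ n.-1 <= (q - 1) * ((2 ^ (g * n) - 1) * m).
  have := exp2_sub1_mul_lt g_gt0 m_gt1 n_ge5.
  by rewrite (mulnC g m) -def_f (expnM 2 f) ltnNge Phi_le.
apply: leq_trans (exp_pred_le_geom_sum _ (prime_gt0 n_prime)) _.
rewrite def_Phi leq_mul // -(mulnK m g_gt0) -def_f.
by apply: rpart_Phi_le => //; rewrite def_f dvdn_mull.
Qed.

Lemma f_odd : odd f.
Proof. by rewrite f_pfactor oddX n_odd orbT. Qed.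

Lemma dvdn_r_pred : 2 * (f * n) %| r.-1.
Proof.
have r_pr := r_prime; have r_gt2 := odd_prime_gt2 r_odd r_pr.
have two_r : 2 %| r.-1 by rewrite dvdn2 -oddS prednK ?prime_gt0 // r_odd.
rewrite Gauss_dvd ?coprime2n ?oddM ?f_odd // two_r {1}f_pfactor -expnSr /=.
apply: (pfactor_dvdn_exponent n_prime exp_pfactor_mod1).
  by rewrite -f_pfactor -dvdn_subn1 ?expn_gt0 //; case/and3P: r_ppdE.
by rewrite fermat_pred // dvdn_prime2 // gtn_eqF.
Qed.

Lemma n_ndvd_q_sub1 : ~~ (n %| q - 1).
Proof.
have n_gt2 : 2 < n by apply: leq_trans n_ge5.
by rewrite dvdn_subn1 ?expn_gt0 // {1}f_pfactor expn_pfactor_mod // !modn_small // ltnW.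
Qed.

Lemma Phi_rpower : Phi = r ^ logn r Phi.
Proof.
have [u r'u def_Phi] := pfactor_coprime r_prime (ltnW Phi_gt1).
have : u %| gcdn n (q - 1) by rewrite Phi_coprime_dvdn // def_Phi dvdn_mulr.
have /eqP -> : coprime n (q - 1) by rewrite prime_coprime ?n_ndvd_q_sub1.
by rewrite dvdn1 => /eqP u1; rewrite {1}def_Phi u1 mul1n.
Qed.

Lemma logn_Phi_gt0 : 0 < logn r Phi.
Proof. by rewrite lt0n; apply: contraTneq Phi_gt1 => A0; rewrite Phi_rpower A0. Qed.

Lemma logn_Phi_lt : logn r Phi < f * n.
Proof.
rewrite -(ltn_exp2l _ _ (isT : 1 < 2)) expnM; apply: leq_ltn_trans (geom_sum_lt_exp n q_gt1).
by rewrite {2}Phi_rpower leq_exp2r ?logn_Phi_gt0 ?prime_gt1 ?r_prime.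
Qed.

Lemma q_dvdn_Phi_sub1 : q %| Phi - 1.
Proof. by rewrite -(prednK (prime_gt0 n_prime)) geom_sumSl addKn dvdn_mulr. Qed.

Lemma r_neq_double_fn_succ : r != (2 * (f * n)).+1.
Proof.
apply/eqP => r_eq; have := f_pfactor; case: (logn n f) => [|[|k]] f_eq.
- have := pow_neq_mersenne (logn r Phi) n_odd n_ge5.
  rewrite expn0 in f_eq; rewrite f_eq mul1n in r_eq.
  by rewrite -r_eq -Phi_rpower f_eq expn1 subn1_exp mul1n eqxx.
- have n'3 : ~~ (3 %| n) by rewrite dvdn_prime2 // eq_sym gtn_eqF // (leq_trans _ n_ge5).
  have : 3 %| r by move: (dvdn3_double_sqr_add1 n'3); rewrite addn1 -mulnn r_eq f_eq expn1.
  rewrite dvdn_prime2 ?r_prime // => /eqP r3; move: r_eq; rewrite -r3 f_eq expn1.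
  by have := n_ge5; nia.
- have nn_le_f : n * n <= f by rewrite f_eq mulnn leq_pexp2l ?prime_gt0.
  have fn_le : f * n <= f ^ 2.
    by rewrite -mulnn leq_mul2l (leq_trans _ nn_le_f) ?leq_pmulr ?prime_gt0 ?orbT.
  have f_gt24 : 24 < f by apply: leq_trans nn_le_f; have := n_ge5; nia.
  have fn_odd : odd (f * n) by rewrite oddM f_odd n_odd.
  have := logn2_sub1_pow_lt fn_odd fn_le f_gt24 logn_Phi_gt0 logn_Phi_lt.
  by rewrite -r_eq -Phi_rpower ltnNge -pfactor_dvdn ?q_dvdn_Phi_sub1 // subn_gt0 Phi_gt1.
Qed.

End UniquePrimitivePrimeDivisor.

Theorem lemma2p11 (n f r : nat) :
  prime n -> 5 <= n -> odd n -> 0 < f ->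
  ppd (2 ^ f) n r -> (forall p, ppd (2 ^ f) n p -> p = r) ->
  4 * n * f + 1 <= r.
Proof.
move=> n_prime n_ge5 n_odd f_gt0 r_ppd r_unique.
have r_gt1 := prime_gt1 (r_prime n_prime f_gt0 r_ppd).
have r_neq := r_neq_double_fn_succ n_prime n_ge5 n_odd f_gt0 r_ppd r_unique.
have /dvdnP [c def_r] := dvdn_r_pred n_prime n_ge5 n_odd f_gt0 r_ppd r_unique.
have {}def_r : r = (c * (2 * (f * n))).+1 by rewrite -def_r prednK // ltnW.
rewrite def_r in r_gt1 r_neq *.
case: c {def_r} r_gt1 r_neq => [|[|c]] //; first by rewrite mul1n eqxx.
by move=> _ _; nia.
Qed.
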